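(* Let $M \in \mathbb{N}$, let $p \in \mathbb{Z}_M^{\times}$, let $q_1, q_2 \in \mathbb{Z}_M$, and let $K, C$ be positive integers with $\gcd(K, M) = 1$. Let $\varphi, \psi : \mathbb{Q} \to \mathbb{Z}$ satisfy $\varphi(x + C) = -\varphi(x)$ and $\psi(x + C) = -\psi(x)$ for all $x \in \frac{C}{K}\mathbb{Z}$ (their values are then reduced modulo $M$). Each grid point $x = \frac{j}{K}$ ($j \in \mathbb{Z}$) is identified with the element $\bar{x} := j \cdot K^{-1} \in \mathbb{Z}_M$. Let $x \mapsto p^x$ be an assignment $\frac{1}{K}\mathbb{Z} \to \mathbb{Z}_M$ satisfying $p^{x+a} = p^x \cdot p^a$ in $\mathbb{Z}_M$ for all $x \in \frac{1}{K}\mathbb{Z}$ and all integers $a \ge 0$. For $x \in \frac{1}{K}\mathbb{Z}$ with $\bar{x} \in \mathbb{Z}_M^{\times}$ define \[ s_M(x) := \big(p^x + q_1 \varphi(Cx) + q_2 \psi(Cx)\big)\cdot \bar{x}^{-1} \in \mathbb{Z}_M . \] Let $t \in \frac{1}{K}\mathbb{Z}$ and nonnegative integers $u, v$ be such that $\bar{t}$, $\overline{t+2v+1}$, $\overline{t+2u}$, $\overline{t+2u+2v+1}$ are units of $\mathbb{Z}_M$, and put $s_0 = s_M(t)$, $s_1 = s_M(t+2v+1)$, $s_2 = s_M(t+2u)$, $s_3 = s_M(t+2u+2v+1)$. Suppose the element $s_2 \cdot \overline{(t + 2u)} + s_3 \cdot \overline{(t + 2u + 2v + 1)}$ is a unit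 in $\mathbb{Z}_M$. Then \[ I_M(t;u,v) := \frac{s_0 \cdot \bar{t} + s_1 \cdot \overline{(t + 2v + 1)}}{s_2 \cdot \overline{(t + 2u)} + s_3 \cdot \overline{(t + 2u + 2v + 1)}} \equiv \frac{1}{p^{2u}} \pmod M. \]
   Context: All arithmetic is in the ring $\mathbb{Z}_M = \mathbb{Z}/M\mathbb{Z}$; $K^{-1}$ is the inverse of $K$ modulo $M$. The oscillators $\varphi,\psi$ are integer-valued and antiperiodic with antiperiod $C$ on the grid $\frac{C}{K}\mathbb{Z}$. *)

From HB Require Import structures.
From mathcomp Require Import all_boot all_order all_algebra.
Set Implicit Arguments. Unset Strict Implicit. Unset Printing Implicit Defensive.
Import Order.TTheory GRing.Theory Num.Theory.
Local Open Scope ring_scope.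

(* Grid points of (1/K)Z are encoded by an integer j, standing for x = j/K. *)

Definition gbar (M K : nat) (j : int) : 'Z_M := (j%:~R : 'Z_M) / (K%:R : 'Z_M).

Definition Cx (K C : nat) (j : int) : rat := (C%:R : rat) * ((j%:~R : rat) / (K%:R : rat)).

(* s_M(x) = (p^x + q1 phi(Cx) + q2 psi(Cx)) * xbar^{-1};
   pw j stands for p^{j/K}; integer values are reduced modulo M via %:~R. *)
Definition sM (M K C : nat) (q1 q2 : 'Z_M) (phi psi : rat -> int)
    (pw : int -> 'Z_M) (j : int) : 'Z_M :=
  (pw j + q1 * ((phi (Cx K C j))%:~R) + q2 * ((psi (Cx K C j))%:~R)) / gbar M K j.

(* Shifting a grid point by an odd integer flips the sign of both
   antiperiodic oscillators, so in s_M(x) x + s_M(x + 2v + 1) (x + 2v + 1)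
   the oscillator terms cancel and only p^x + p^(x + 2v + 1) survives.
   The denominator of I_M(t; u, v) is the same antipodal pair shifted by 2u,
   hence equals the numerator times p^(2u). *)
From HB Require Import structures.
From mathcomp Require Import all_boot all_order all_algebra.
From mathcomp Require Import ring.
Import Order.TTheory GRing.Theory Num.Theory.
Local Open Scope ring_scope.

Lemma divr_mulr_unit (R : comUnitRingType) (x y : R) :
  x * y \is a GRing.unit -> x / (x * y) = y^-1.
Proof.
rewrite unitrM => /andP[xU yU].
by rewrite invrM // mulrCA divrr // mulr1.
Qed.

Section Antiperiodic.

Variables (K C : nat) (f : rat -> int).
Hypothesis K_gt0 : (0 < K)%N.
Hypothesis f_anti : forall j : int, f (Cx K C j + C%:R) = - f (Cx K C j).

Lemma Cx_addK (j : int) : Cx K C (j + K%:Z) = Cx K C j + C%:R.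
Proof.
have K_neq0 : (K%:R : rat) != 0 by rewrite pnatr_eq0 -lt0n.
by rewrite /Cx intrD mulrDl mulrDr pmulrn divff // mulr1.
Qed.

Lemma antiperiodic_shift (n : nat) (j : int) :
  f (Cx K C (j + (n * K)%N%:Z)) = (-1) ^+ n * f (Cx K C j).
Proof.
elim: n => [|n IHn]; first by rewrite mul0n addr0 expr0 mul1r.
rewrite mulSn PoszD addrA addrAC Cx_addK f_anti IHn exprS.
by rewrite !mulN1r mulNr.
Qed.

Lemma antiperiodic_shift_odd (n : nat) (j : int) :
  f (Cx K C (j + ((2 * n + 1) * K)%N%:Z)) = - f (Cx K C j).
Proof.
by rewrite antiperiodic_shift exprD exprM sqrrN !expr1n expr1 mul1r mulN1r.
Qed.

End Antiperiodic.

Section AntipodalPair.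

Variables (M K C : nat) (q1 q2 : 'Z_M) (phi psi : rat -> int) (pw : int -> 'Z_M).
Hypothesis K_gt0 : (0 < K)%N.
Hypothesis phi_anti : forall j : int, phi (Cx K C j + C%:R) = - phi (Cx K C j).
Hypothesis psi_anti : forall j : int, psi (Cx K C j + C%:R) = - psi (Cx K C j).

Let s := sM K C q1 q2 phi psi pw.

Lemma sM_mulr_gbar (j : int) : gbar M K j \is a GRing.unit ->
  s j * gbar M K j
    = pw j + q1 * (phi (Cx K C j))%:~R + q2 * (psi (Cx K C j))%:~R.
Proof. by move=> jU; rewrite /s /sM divrK. Qed.

Lemma sM_antipodal_sum (n : nat) (j : int) :
    let j' := j + ((2 * n + 1) * K)%N%:Z in
    gbar M K j \is a GRing.unit -> gbar M K j' \is a GRing.unit ->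
  s j * gbar M K j + s j' * gbar M K j' = pw j + pw j'.
Proof.
move=> j' jU j'U; rewrite !sM_mulr_gbar //.
by rewrite /j' !antiperiodic_shift_odd // !intrN; ring.
Qed.

End AntipodalPair.

Theorem mainTheorem2 (M : nat) (hM : (1 < M)%N) (p q1 q2 : 'Z_M)
  (hp : p \is a GRing.unit) (K C : nat) (hK : (0 < K)%N) (hC : (0 < C)%N)
  (hKM : coprime K M) (phi psi : rat -> int)
  (hphi : forall j : int,
      phi ((C%:R : rat) * (j%:~R / K%:R) + C%:R) = - phi ((C%:R : rat) * (j%:~R / K%:R)))
  (hpsi : forall j : int,
      psi ((C%:R : rat) * (j%:~R / K%:R) + C%:R) = - psi ((C%:R : rat) * (j%:~R / K%:R)))
  (pw : int -> 'Z_M)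
  (hpw : forall (j : int) (a : nat), pw (j + (a * K)%N%:Z) = pw j * p ^+ a)
  (t : int) (u v : nat)
  (h0 : gbar M K t \is a GRing.unit)
  (h1 : gbar M K (t + ((2 * v + 1) * K)%N%:Z) \is a GRing.unit)
  (h2 : gbar M K (t + ((2 * u) * K)%N%:Z) \is a GRing.unit)
  (h3 : gbar M K (t + ((2 * u + 2 * v + 1) * K)%N%:Z) \is a GRing.unit) :
  let s0 := sM K C q1 q2 phi psi pw t in
  let s1 := sM K C q1 q2 phi psi pw (t + ((2 * v + 1) * K)%N%:Z) in
  let s2 := sM K C q1 q2 phi psi pw (t + ((2 * u) * K)%N%:Z) in
  let s3 := sM K C q1 q2 phi psi pw (t + ((2 * u + 2 * v + 1) * K)%N%:Z) in
  let den := s2 * gbar M K (t + ((2 * u) * K)%N%:Z)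
           + s3 * gbar M K (t + ((2 * u + 2 * v + 1) * K)%N%:Z) in
  den \is a GRing.unit ->
  (s0 * gbar M K t + s1 * gbar M K (t + ((2 * v + 1) * K)%N%:Z)) / den
    = (p ^+ (2 * u))^-1.
Proof.
move=> s0 s1 s2 s3 den denU.
set t1 := t + ((2 * v + 1) * K)%N%:Z; set t2 := t + ((2 * u) * K)%N%:Z.
have t3E : t + ((2 * u + 2 * v + 1) * K)%N%:Z = t2 + ((2 * v + 1) * K)%N%:Z.
  by rewrite -addrA -PoszD -mulnDl addnA.
rewrite t3E in h3.
have numE : s0 * gbar M K t + s1 * gbar M K t1 = pw t + pw t1.
  exact: sM_antipodal_sum.
have denE : den = (pw t + pw t1) * p ^+ (2 * u).
  rewrite /den /s2 /s3 t3E sM_antipodal_sum // mulrDl -!hpw.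
  by rewrite /t1 /t2 addrAC.
by rewrite numE denE divr_mulr_unit // -denE.
Qed.
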